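(* Let $m\in\mathbb{N}$ with $m\ge1$. (a) If $m$ is odd, then $F_m$ is $\mathbb{Z}_m$-cordial. Moreover, $F_n$ is $\mathbb{Z}_m$-cordial for all $n\in\mathbb{N}$ if and only if $F_1,F_2,\ldots,F_{m-1}$ are $\mathbb{Z}_m$-cordial. (b) If $m$ is even, then $F_{2m}$ is $\mathbb{Z}_m$-cordial. Moreover, $F_n$ is $\mathbb{Z}_m$-cordial for all $n\in\mathbb{N}$ if and only if $F_1,F_2,\ldots,F_{2m-1}$ are $\mathbb{Z}_m$-cordial. (c) If $m$ is even but $4\nmid m$, then $F_m$ is not $\mathbb{Z}_m$-cordial.
   Context: $\mathbb{N}=\mathbb{Z}_{\ge0}$. Graphs are finite, simple and undirected. For $n\in\mathbb{N}$, the friendship graph $F_n$ is the union of $n$ copies of the triangle $C_3$ joined at a single common (central) vertex. For an abelian group $A$ and a graph $G=(V,E)$, a vertex labeling $\ell:V\to A$ induces an edge labeling $\ell(\{v_1,v_2\})=\ell(v_1)+\ell(v_2)$. Let $f_V(a)=|\{v\in V:\ell(v)=a\}|$ and $f_E(a)=|\{e\in E:\ell(e)=a\}|$. The labeling is $A$-cordial if $|f_V(a_1)-f_V(a_2)|\le 1$ and $|f_E(a_1)-f_E(a_2)|\le 1$ for all $a_1,a_2\in A$; $G$ is $A$-cordial if it admits an $A$-cordial labeling. *)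

From HB Require Import structures.
From mathcomp Require Import all_boot all_algebra.
Set Implicit Arguments. Unset Strict Implicit. Unset Printing Implicit Defensive.
Import GRing.Theory.
Local Open Scope ring_scope.

Definition edges (V : finType) (e : rel V) : {set {set V}} :=
  [set [set x; y] | x in V, y in V & (x != y) && e x y].

Definition cordial_labeling (A : finZmodType) (V : finType) (e : rel V)
    (l : V -> A) : Prop :=
  (forall a1 a2 : A,
      #|[set v | l v == a1]| <= #|[set v | l v == a2]|.+1)%N /\
  (forall a1 a2 : A,
      #|[set S in edges e | (\sum_(v in S) l v)%R == a1]|
        <= #|[set S in edges e | (\sum_(v in S) l v)%R == a2]|.+1)%N.

Definition cordial (A : finZmodType) (V : finType) (e : rel V) : Prop :=
  exists l : V -> A, cordial_labeling e l.

(* Z_m for m >= 1: the ordinals 'I_m (written 'I_(m.-1.+1), equal to 'I_m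
   when m >= 1) with addition modulo m. *)
Definition Zmod (m : nat) : finZmodType := 'I_(m.-1.+1).

(* Friendship graph F_n on vertices 0..2n: vertex 0 is the center, and for
   i < n the vertices 2i+1, 2i+2 form the i-th triangle with 0. *)
Definition friendship (n : nat) : rel 'I_(2 * n).+1 :=
  fun x y => (x != y) &&
    [|| (nat_of_ord x == 0)%N, (nat_of_ord y == 0)%N
      | ((x.-1)./2 == (y.-1)./2)%N ].

Definition Zm_cordial_friendship (m n : nat) : Prop :=
  cordial (Zmod m) (@friendship n).

(* A labeling of F_n is determined by the label c of the centre and the labels
   (x, y) of the two outer vertices of each triangle; it is cordial iff the
   vertex labels c, x, y, ... and the edge labels c + x, c + y, x + y, ... are
   balanced multisets.  Appending triangles whose outer vertices and edges use
   every element of Z_m equally often preserves balance.  For odd m the m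
   triangles (x, x) do, since doubling is a bijection of Z_m; for even m the 2m
   triangles (x, x) and (x, x + 1) do, since x |-> 2x and x |-> 2x + 1 together
   hit every residue twice.  So cordiality of F_n is periodic in n, and F_0 is
   cordial.  If m = 2 mod 4, the 3m edge labels of a cordial F_m take each value
   exactly three times, so an odd number 3m/2 of them are odd; but each triangle
   carries an even number of odd edge labels. *)

From mathcomp Require Import all_boot all_algebra zify.
Set Implicit Arguments. Unset Strict Implicit. Unset Printing Implicit Defensive.
Import GRing.Theory.

Lemma card_eq_count (T : finType) (A : {pred T}) (s : seq T) (P : pred T) :
  uniq s -> A =i [pred x in s | P x] -> #|A| = count P s.
Proof.
move=> s_uniq defA; rewrite (eq_card defA) -size_filter.
rewrite -(card_uniqP (filter_uniq P s_uniq)); apply: eq_card => x.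
by rewrite !inE mem_filter andbC.
Qed.

Lemma count_flatten_pairs (T U : Type) (f g : T -> U) (P : pred U) (s : seq T) :
  count P (flatten [seq [:: f x; g x] | x <- s]) =
  count P [seq f x | x <- s] + count P [seq g x | x <- s].
Proof. by elim: s => //= x s ->; lia. Qed.

Lemma flatten_iota_pairs m n :
  flatten [seq [:: m + i.*2; m + i.*2.+1] | i <- iota 0 n] = iota m n.*2.
Proof.
elim: n => // n IH.
by rewrite -addn1 iotaD map_cat flatten_cat IH doubleD iotaD /= add0n addnS.
Qed.

Lemma count_odd_iota_double n : count odd (iota 0 n.*2) = n.
Proof.
elim: n => // n IH.
by rewrite doubleS -addn2 iotaD count_cat IH /= odd_double addn1.
Qed.

Lemma count_double_mod h k : k < h.*2 ->
  count_mem k [seq i.*2 %% h.*2 | i <- iota 0 h.*2] +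
  count_mem k [seq i.*2.+1 %% h.*2 | i <- iota 0 h.*2] = 2.
Proof.
move=> lt_kh; rewrite -count_flatten_pairs.
(* i and h + i have the same double modulo h.*2. *)
have -> : iota 0 h.*2 = iota 0 h ++ [seq h + i | i <- iota 0 h].
  by rewrite -addnn iotaD -iotaDl add0n addn0.
rewrite map_cat -map_comp flatten_cat.
have -> : [seq [:: i.*2 %% h.*2; i.*2.+1 %% h.*2] | i <- iota 0 h] =
          [seq [:: 0 + i.*2; 0 + i.*2.+1] | i <- iota 0 h].
  by apply/eq_in_map => i; rewrite mem_iota => /andP[_ lt_ih]; rewrite !modn_small //; lia.
have -> : [seq ((fun i => [:: i.*2 %% h.*2; i.*2.+1 %% h.*2]) \o addn h) i | i <- iota 0 h] =
          [seq [:: 0 + i.*2; 0 + i.*2.+1] | i <- iota 0 h].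
  apply/eq_in_map => i; rewrite mem_iota => /andP[_ lt_ih] /=.
  by rewrite doubleD -addnS !modnDl !modn_small //; lia.
rewrite (flatten_iota_pairs 0 h) count_cat count_uniq_mem ?iota_uniq // mem_iota.
by rewrite lt_kh.
Qed.

Lemma forall_nat_period (P : nat -> Prop) k :
  0 < k -> P 0 -> (forall n, P n -> P (n + k)) ->
  (forall n, P n) <-> (forall n, 1 <= n <= k - 1 -> P n).
Proof.
move=> k_gt0 P0 step; split=> [Pn n _ | init]; first exact: Pn.
elim/ltn_ind => -[//|n] IH.
have [lt_nk | le_kn] := ltnP n (k - 1); first by apply: init; lia.
by have := step _ (IH (n.+1 - k) ltac:(lia)); rewrite subnK //; lia.
Qed.

Lemma mem_edges (V : finType) (e : rel V) x y :
  x != y -> e x y -> [set x; y] \in edges e.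
Proof. by move=> neq_xy exy; apply/imset2P; exists x y; rewrite // inE neq_xy. Qed.

Lemma big_set2 (R : Type) (idx : R) (op : Monoid.com_law idx) (T : finType)
    (F : T -> R) (x y : T) :
  x != y -> \big[op/idx]_(v in [set x; y]) F v = op (F x) (F y).
Proof. by move=> neq_xy; rewrite big_setU1 ?big_set1 // inE. Qed.

Section Labels.
Variable A : finZmodType.
Local Open Scope ring_scope.

Definition balanced (s : seq A) : Prop :=
  forall a b, (count_mem a s <= (count_mem b s).+1)%N.

Definition uniform (k : nat) (s : seq A) : Prop := forall a, count_mem a s = k.

Lemma uniform_cat k1 k2 s t :
  uniform k1 s -> uniform k2 t -> uniform (k1 + k2) (s ++ t).
Proof. by move=> us ut a; rewrite count_cat us ut. Qed.

Lemma uniform_map_enum (f : A -> A) : injective f -> uniform 1 [seq f x | x <- enum A].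
Proof.
move=> f_inj a; have [g _ gK] := injF_bij f_inj.
rewrite count_uniq_mem; last by rewrite map_inj_uniq // enum_uniq.
by rewrite -(gK a) map_f // mem_enum.
Qed.

Lemma count_sum_mem (P : pred A) s : count P s = (\sum_(a | P a) count_mem a s)%N.
Proof.
elim: s => [|x s IH] /=; first by rewrite big1.
rewrite IH big_split /=; congr (_ + _)%N.
rewrite big_mkcond (bigD1 x) //= eqxx big1 ?addn0 => [|a /negbTE]; first by case: (P x).
by rewrite eq_sym => ->; case: (P a).
Qed.

Lemma count_uniform k (P : pred A) s : uniform k s -> count P s = (k * #|P|)%N.
Proof.
by move=> us; rewrite count_sum_mem (eq_bigr _ (fun a _ => us a)) sum_nat_const mulnC.
Qed.

Lemma balanced_uniform k s : balanced s -> size s = (k * #|A|)%N -> uniform k s.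
Proof.
move=> bal size_s a.
have sum_s : (count_mem a s + \sum_(b | b != a) count_mem b s)%N = (k * #|A|)%N.
  by rewrite -size_s -count_predT count_sum_mem [RHS](bigD1 a).
have card_others : #|[pred b | b != a]| = #|A|.-1 by rewrite -(cardC1 a).
have A_gt0 : (0 < #|A|)%N by apply/card_gt0P; exists a.
case: (ltngtP (count_mem a s) k) => // cmp.
- have : (\sum_(b | b != a) count_mem b s <= \sum_(b | b != a) k)%N.
    by apply: leq_sum => b _; exact: leq_trans (bal b a) cmp.
  rewrite sum_nat_const card_others; nia.
- have : (\sum_(b | b != a) k <= \sum_(b | b != a) count_mem b s)%N.
    by apply: leq_sum => b _; rewrite -ltnS (leq_trans cmp (bal a b)).
  rewrite sum_nat_const card_others; nia.
Qed.

Lemma uniform_enum : uniform 1 (enum A).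
Proof. by rewrite -[enum A]map_id; apply: uniform_map_enum. Qed.

Definition tip_labels (p : seq (A * A)) : seq A := unzip1 p ++ unzip2 p.

Definition edge_labels (c : A) (p : seq (A * A)) : seq A :=
  [seq c + q.1 | q <- p] ++ [seq c + q.2 | q <- p] ++ [seq q.1 + q.2 | q <- p].

(* c is the label of the centre of F_n and p lists the labels of the two
   outer vertices of each triangle. *)
Definition cordial_pairs (c : A) (p : seq (A * A)) : Prop :=
  balanced (c :: tip_labels p) /\ balanced (edge_labels c p).

Lemma count_tip_labels_cat a p b :
  count_mem a (tip_labels (p ++ b)) =
  (count_mem a (tip_labels p) + count_mem a (tip_labels b))%N.
Proof. by rewrite /tip_labels /unzip1 /unzip2 !map_cat !count_cat; lia. Qed.

Lemma count_edge_labels_cat a c p b :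
  count_mem a (edge_labels c (p ++ b)) =
  (count_mem a (edge_labels c p) + count_mem a (edge_labels c b))%N.
Proof. by rewrite /edge_labels !map_cat !count_cat; lia. Qed.

Lemma cordial_pairs_cat c p b k1 k2 :
  uniform k1 (tip_labels b) -> uniform k2 (edge_labels c b) ->
  cordial_pairs c p -> cordial_pairs c (p ++ b).
Proof.
move=> tip_b edge_b [tip_p edge_p]; split=> a1 a2.
- by rewrite /= !count_tip_labels_cat !tip_b !addnA -addSn leq_add2r; apply: tip_p.
- by rewrite !count_edge_labels_cat !edge_b -addSn leq_add2r; apply: edge_p.
Qed.

Definition graph_block (f : A -> A) : seq (A * A) := [seq (x, f x) | x <- enum A].

Lemma size_graph_block f : size (graph_block f) = #|A|.
Proof. by rewrite size_map -cardE. Qed.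

Lemma tip_labels_graph_block f :
  tip_labels (graph_block f) = enum A ++ [seq f x | x <- enum A].
Proof. by rewrite /tip_labels /unzip1 /unzip2 -!map_comp; congr (_ ++ _); apply: map_id. Qed.

Lemma edge_labels_graph_block c f :
  edge_labels c (graph_block f) =
  [seq c + x | x <- enum A] ++ [seq c + f x | x <- enum A] ++ [seq x + f x | x <- enum A].
Proof. by rewrite /edge_labels -!map_comp. Qed.

Lemma cordial_pairs_cat_diag c p :
  injective (fun x : A => x + x) ->
  cordial_pairs c p -> cordial_pairs c (p ++ graph_block id).
Proof.
move=> double_inj; apply: cordial_pairs_cat.
- by rewrite tip_labels_graph_block map_id; apply: uniform_cat uniform_enum uniform_enum.
- rewrite edge_labels_graph_block; apply: uniform_cat; first exact: uniform_map_enum (addrI c).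
  by apply: uniform_cat; apply: uniform_map_enum; [apply: addrI | apply: double_inj].
Qed.

Lemma cordial_pairs_cat_diag_shift c p u :
  uniform 2 ([seq x + x | x <- enum A] ++ [seq x + (x + u) | x <- enum A]) ->
  cordial_pairs c p ->
  cordial_pairs c (p ++ (graph_block id ++ graph_block (fun x => x + u))).
Proof.
move=> double_shift; apply: (@cordial_pairs_cat _ _ _ 4 6) => a.
- rewrite count_tip_labels_cat !tip_labels_graph_block map_id !count_cat.
  by rewrite !uniform_enum (uniform_map_enum (addIr u)).
- rewrite count_edge_labels_cat !edge_labels_graph_block !count_cat.
  rewrite !(uniform_map_enum (addrI c)) (uniform_map_enum (inj_comp (addrI c) (addIr u))).
  by have := double_shift a; rewrite count_cat; lia.
Qed.

Lemma cordial_pairs_nil c : cordial_pairs c [::].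
Proof. by split=> a b //=; rewrite addn0; case: (c == a). Qed.

End Labels.

Section Friendship.
Variable n : nat.
Local Notation V := 'I_(2 * n).+1.

Definition tip1 (i : nat) : V := inord i.*2.+1.
Definition tip2 (i : nat) : V := inord i.*2.+2.

Lemma val_tip1 i : i < n -> tip1 i = i.*2.+1 :> nat.
Proof. by move=> lt_in; rewrite inordK //; lia. Qed.

Lemma val_tip2 i : i < n -> tip2 i = i.*2.+2 :> nat.
Proof. by move=> lt_in; rewrite inordK //; lia. Qed.

Lemma enum_friendship :
  enum V = ord0 :: flatten [seq [:: tip1 i; tip2 i] | i <- iota 0 n].
Proof.
apply: (inj_map val_inj); rewrite val_enum_ord /= map_flatten -map_comp.
have -> : [seq (map val \o (fun i => [:: tip1 i; tip2 i])) i | i <- iota 0 n] =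
          [seq [:: 1 + i.*2; 1 + i.*2.+1] | i <- iota 0 n].
  by apply/eq_in_map => i; rewrite mem_iota => /andP[_ lt_in] /=; rewrite val_tip1 // val_tip2.
by rewrite (flatten_iota_pairs 1 n) mul2n.
Qed.

Lemma friendship_sym : symmetric (@friendship n).
Proof. by move=> x y; rewrite /friendship eq_sym orbCA [(_.-1./2 == _)%N]eq_sym. Qed.

Definition friendship_edges : seq {set V} :=
  [seq [set ord0; tip1 i] | i <- iota 0 n] ++ [seq [set ord0; tip2 i] | i <- iota 0 n] ++
  [seq [set tip1 i; tip2 i] | i <- iota 0 n].

Lemma tips_neq i : i < n -> [/\ ord0 != tip1 i, ord0 != tip2 i & tip1 i != tip2 i].
Proof.
by move=> lt_in; rewrite -!val_eqE /= val_tip1 // val_tip2 //; split; apply/eqP; lia.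
Qed.

Lemma friendship_edges_uniq : uniq friendship_edges.
Proof.
(* The keys of the three kinds of edges are 3, 1 and 2 modulo 4. *)
pose key (S : {set V}) := ((\sum_(v in S) val v).*2 + (ord0 \in S))%N.
have key_iota (E : nat -> {set V}) (f : nat -> nat) :
    (forall i, i < n -> key (E i) = f i) -> [seq key (E i) | i <- iota 0 n] = map f (iota 0 n).
  by move=> keyE; apply/eq_in_map => i; rewrite mem_iota => /andP[_ /keyE].
apply: (@map_uniq _ _ key); rewrite !map_cat -!map_comp.
rewrite (key_iota _ (fun i => 4 * i + 3)) => [|i lt_in]; last first.
  by have [? ? ?] := tips_neq lt_in; rewrite /key big_set2 // setU11 /= val_tip1 //; lia.
rewrite (key_iota _ (fun i => 4 * i + 5)) => [|i lt_in]; last first.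
  by have [? ? ?] := tips_neq lt_in; rewrite /key big_set2 // setU11 /= val_tip2 //; lia.
rewrite (key_iota _ (fun i => 8 * i + 6)) => [|i lt_in]; last first.
  have [ne01 ne02 ne12] := tips_neq lt_in.
  by rewrite /key big_set2 // !inE (negbTE ne01) (negbTE ne02) /= val_tip1 // val_tip2 //; lia.
rewrite !cat_uniq has_cat !map_inj_uniq ?iota_uniq /= => [|i j|i j|i j]; try lia.
rewrite negb_or andbT -andbA; apply/and3P.
by split; apply/hasPn => _ /mapP[j _ ->]; apply/mapP => -[i _]; lia.
Qed.

Lemma tip1_of_val (v : V) i : v = i.*2.+1 :> nat -> v = tip1 i.
Proof. by move=> vE; apply: val_inj; rewrite /= vE val_tip1 //; have := ltn_ord v; lia. Qed.

Lemma tip2_of_val (v : V) i : v = i.*2.+2 :> nat -> v = tip2 i.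
Proof. by move=> vE; apply: val_inj; rewrite /= vE val_tip2 //; have := ltn_ord v; lia. Qed.

Lemma friendship_edge_mem (x y : V) :
  x < y -> friendship x y -> [set x; y] \in friendship_edges.
Proof.
move=> lt_xy /andP[_ adj].
have [i y_blade] : exists i, (y : nat).-1./2 = i by exists (y : nat).-1./2.
have lt_in : i < n by have := ltn_ord y; lia.
have i_mem : i \in iota 0 n by rewrite mem_iota.
rewrite !mem_cat; apply/or3P; have [x0 | x_ne0] := eqVneq (x : nat) 0.
- have -> : x = ord0 by apply: val_inj.
  have [odd_y | even_y] := boolP (odd y).
  + have -> : y = tip1 i by apply: tip1_of_val; lia.
    by apply: Or31; apply: map_f.
  + have -> : y = tip2 i by apply: tip2_of_val; lia.
    by apply: Or32; apply: map_f.
- move: adj; rewrite (negbTE x_ne0) /= => /orP[/eqP y0 | /eqP same_blade]; first lia.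
  have -> : x = tip1 i by apply: tip1_of_val; lia.
  have -> : y = tip2 i by apply: tip2_of_val; lia.
  by apply: Or33; apply: map_f.
Qed.

Lemma mem_friendship_edges : edges (@friendship n) =i friendship_edges.
Proof.
move=> S; apply/idP/idP.
- case/imset2P => x y _ /[!inE] /and3P[_ _ adj] ->.
  case: (ltngtP x y) => [lt_xy | lt_yx | /val_inj eq_xy].
  + exact: friendship_edge_mem.
  + by rewrite setUC; apply: friendship_edge_mem; rewrite // friendship_sym.
  + by move: adj; rewrite /friendship eq_xy eqxx.
- rewrite !mem_cat => /or3P[] /mapP[i]; rewrite mem_iota => /andP[_ lt_in] ->;
    have [ne01 ne02 ne12] := tips_neq lt_in; apply: mem_edges => //;
    rewrite /friendship ?ne01 ?ne02 ?ne12 //=.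
  by rewrite val_tip1 // val_tip2 //; apply/eqP; lia.
Qed.

Variable A : finZmodType.

Definition tip_pairs (l : V -> A) : seq (A * A) :=
  [seq (l (tip1 i), l (tip2 i)) | i <- iota 0 n].

Lemma card_vertex_label (l : V -> A) a :
  #|[set v | l v == a]| = count_mem a (l ord0 :: tip_labels (tip_pairs l)).
Proof.
rewrite (@card_eq_count _ _ (enum V) (fun v => l v == a)) ?enum_uniq // => [|v]; last first.
  by rewrite !inE mem_enum.
by rewrite enum_friendship /= count_flatten_pairs /tip_labels /unzip1 /unzip2 count_cat
  -!map_comp !count_map.
Qed.

Lemma map_edge_sums (l : V -> A) :
  [seq (\sum_(v in E) l v)%R | E : {set V} <- friendship_edges] =
  edge_labels (l ord0) (tip_pairs l).
Proof.
rewrite /friendship_edges /edge_labels !map_cat -!map_comp.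
by congr (_ ++ _ ++ _); apply/eq_in_map => i; rewrite mem_iota => /andP[_ lt_in];
  have [ne01 ne02 ne12] := tips_neq lt_in; rewrite /= big_set2.
Qed.

Lemma card_edge_label (l : V -> A) a :
  #|[set S in edges (@friendship n) | (\sum_(v in S) l v)%R == a]| =
  count_mem a (edge_labels (l ord0) (tip_pairs l)).
Proof.
rewrite -map_edge_sums count_map; apply: card_eq_count friendship_edges_uniq _ => S.
by rewrite !inE mem_friendship_edges.
Qed.

(* Vertices 2i+1 and 2i+2 get the two components of the i-th pair of p. *)
Definition pairs_labeling (c : A) (p : seq (A * A)) (v : V) : A :=
  if v : nat is k.+1 then (if odd k then snd else fst) (nth (c, c) p k./2) else c.

Lemma tip_pairs_labeling c p : size p = n -> tip_pairs (pairs_labeling c p) = p.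
Proof.
move=> size_p; rewrite -[RHS](mkseq_nth (c, c)) size_p.
apply/eq_in_map => i; rewrite mem_iota => /andP[_ lt_in].
rewrite /pairs_labeling val_tip1 // val_tip2 //= odd_double uphalf_double doubleK.
by case: nth.
Qed.

Lemma cordial_friendshipP :
  cordial A (@friendship n) <-> exists (c : A) p, size p = n /\ cordial_pairs c p.
Proof.
split=> [[l [vertex_bal edge_bal]] | [c [p [size_p [vertex_bal edge_bal]]]]].
- exists (l ord0), (tip_pairs l); split; first by rewrite size_map size_iota.
  by split=> a b; rewrite -?card_vertex_label -?card_edge_label.
- exists (pairs_labeling c p); split=> a b.
  + by rewrite !card_vertex_label tip_pairs_labeling.
  + by rewrite !card_edge_label tip_pairs_labeling.
Qed.

End Friendship.

Section CyclicGroup.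
Variable N : nat.
Local Notation Z := 'I_N.+1.
Local Open Scope ring_scope.

Lemma val_addZ (x y : Z) : val (x + y) = ((x + y) %% N.+1)%N.
Proof. by []. Qed.

Lemma double_inj_odd : odd N.+1 -> injective (fun x : Z => x + x).
Proof.
move=> odd_N; suff le_inj (x y : Z) : (x <= y)%N -> x + x = y + y -> x = y.
  by move=> x y; case: (leqP x y) => [|/ltnW] le_xy eq_dbl; last symmetry; apply: le_inj.
move=> le_xy /(congr1 val); rewrite !val_addZ !addnn => /eqP eq_dbl.
have dvd_dbl : (N.+1 %| (y - x).*2)%N by rewrite doubleB -eqn_mod_dvd ?leq_double // eq_sym.
have : (N.+1 %| y - x)%N by rewrite -(@Gauss_dvdl _ _ 2) ?coprimen2 // muln2.
have [/eqP|pos] := posnP (y - x)%N; first by rewrite subn_eq0 => le_yx _; apply: ord_inj; lia.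
by rewrite gtnNdvd //; have := ltn_ord y; lia.
Qed.

Lemma map_val_enum (f : Z -> Z) (g : nat -> nat) :
  (forall x : Z, val (f x) = g x) -> map val (map f (enum Z)) = map g (iota 0 N.+1).
Proof. by move=> fg; rewrite -val_enum_ord; elim: (enum Z) => //= x s ->; rewrite fg. Qed.

(* 'I_N.+1 is a ring only for N > 0, hence [inord 1] for the generator. *)
Lemma uniform_double_shift :
  ~~ odd N.+1 -> uniform 2 ([seq x + x | x <- enum Z] ++ [seq x + (x + inord 1) | x <- enum Z]).
Proof.
move=> even_N a; have one_lt : (1 < N.+1)%N by move: even_N; case: (N).
have count_val (s : seq Z) : count_mem a s = count_mem (val a) (map val s).
  by rewrite count_map; apply: eq_count => x; rewrite /= val_eqE.
rewrite count_cat !count_val (@map_val_enum _ (fun i => i.*2 %% N.+1)%N) => [|x]; last first.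
  by rewrite val_addZ addnn.
rewrite (@map_val_enum _ (fun i => i.*2.+1 %% N.+1)%N) => [|x]; last first.
  by rewrite !val_addZ inordK // modnDmr addn1 addnS addnn.
have lt_a : (val a < N.+1)%N := ltn_ord a.
move: (val a) lt_a => k; rewrite -(even_halfK even_N); exact: count_double_mod.
Qed.

Lemma odd_addZ (x y : Z) : ~~ odd N.+1 -> odd (x + y)%R = odd x (+) odd y.
Proof.
by move=> even_N; rewrite val_addZ odd_mod ?oddD //; apply/negbTE.
Qed.

Lemma even_count_odd_edge_labels (c : Z) p :
  ~~ odd N.+1 -> ~~ odd (count (fun a : Z => odd a) (edge_labels c p)).
Proof.
move=> even_N; elim: p => [|q p IH] //; move: IH.
rewrite /edge_labels !count_cat /= !oddD !oddb !odd_addZ //.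
move: (odd (count _ _)) (odd (count _ _)) (odd (count _ _)) (odd c) (odd q.1) (odd q.2).
by do 6 case.
Qed.

Lemma card_odd_ord : ~~ odd N.+1 -> #|[pred a : Z | odd a]| = N.+1./2.
Proof.
move=> even_N; rewrite (@card_eq_count _ _ (enum Z) (fun a : Z => odd a)) ?enum_uniq //;
  last by move=> a; rewrite !inE mem_enum.
have -> : count (fun a : Z => odd a) (enum Z) = count odd (map val (enum Z)).
  by rewrite count_map.
by rewrite val_enum_ord -{1}(even_halfK even_N) count_odd_iota_double.
Qed.

Lemma edge_labels_unbalanced (c : Z) p :
  ~~ odd N.+1 -> odd N.+1./2 -> size p = N.+1 -> ~ balanced (edge_labels c p).
Proof.
move=> even_N odd_half size_p /balanced_uniform unif.
have {}unif : uniform 3 (edge_labels c p).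
  by apply: unif; rewrite !size_cat !size_map size_p card_ord; lia.
have := even_count_odd_edge_labels c p even_N.
by rewrite (count_uniform _ unif) card_odd_ord // oddM odd_half.
Qed.

End CyclicGroup.

Lemma Zm_cordial_friendship0 m : Zm_cordial_friendship m 0.
Proof.
by apply/cordial_friendshipP; exists 0%R, [::]; split=> //; apply: cordial_pairs_nil.
Qed.

Lemma Zm_cordial_friendship_add_odd m :
  odd m -> forall n, Zm_cordial_friendship m n -> Zm_cordial_friendship m (n + m).
Proof.
case: m => [//|N] odd_m n /cordial_friendshipP[c [p [size_p cordial_p]]].
apply/cordial_friendshipP; exists c, (p ++ graph_block id); split.
  by rewrite size_cat size_graph_block size_p card_ord.
exact: cordial_pairs_cat_diag (double_inj_odd odd_m) cordial_p.
Qed.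

Lemma Zm_cordial_friendship_add_even m :
  ~~ odd m -> forall n, Zm_cordial_friendship m n -> Zm_cordial_friendship m (n + 2 * m).
Proof.
case: m => [|N] even_m n; first by rewrite addn0.
case/cordial_friendshipP=> c [p [size_p cordial_p]]; apply/cordial_friendshipP.
exists c, (p ++ (graph_block id ++ graph_block (fun x => x + inord 1)%R)); split.
  by rewrite !size_cat !size_graph_block size_p card_ord; lia.
exact: cordial_pairs_cat_diag_shift (uniform_double_shift even_m) cordial_p.
Qed.

Lemma Zm_not_cordial_friendship m :
  ~~ odd m -> ~~ (4 %| m) -> ~ Zm_cordial_friendship m m.
Proof.
case: m => [//|N] even_m not4 /cordial_friendshipP[c [p [size_p [_ edge_bal]]]].
by apply: (edge_labels_unbalanced even_m _ size_p edge_bal); move: even_m not4; lia.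
Qed.

Unset Implicit Arguments.

Theorem theorem8p3 (m : nat) (hm : (1 <= m)%N) :
  (odd m ->
     Zm_cordial_friendship m m /\
     ((forall n : nat, Zm_cordial_friendship m n) <->
      (forall n : nat, (1 <= n <= m - 1)%N -> Zm_cordial_friendship m n))) /\
  (~~ odd m ->
     Zm_cordial_friendship m (2 * m) /\
     ((forall n : nat, Zm_cordial_friendship m n) <->
      (forall n : nat, (1 <= n <= 2 * m - 1)%N -> Zm_cordial_friendship m n))) /\
  (~~ odd m -> ~~ (4 %| m)%N -> ~ Zm_cordial_friendship m m).
Proof.
have period k : 0 < k ->
    (forall n, Zm_cordial_friendship m n -> Zm_cordial_friendship m (n + k)) ->
    Zm_cordial_friendship m k /\
    ((forall n, Zm_cordial_friendship m n) <->
     (forall n, 1 <= n <= k - 1 -> Zm_cordial_friendship m n)).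
  move=> k_gt0 step; split; last exact: forall_nat_period k_gt0 (Zm_cordial_friendship0 m) step.
  by rewrite -[k]add0n; apply/step/Zm_cordial_friendship0.
split; [|split].
- by move=> odd_m; apply: period hm (Zm_cordial_friendship_add_odd odd_m).
- by move=> even_m; apply: period; [lia | exact: Zm_cordial_friendship_add_even even_m].
- exact: Zm_not_cordial_friendship.
Qed.
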